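(* Let $n\ge2$ and let $F:\mathbf{R}^n\to\mathbf{R}$ be an integrand. (i) $\mathcal{D}(F)$ is the support function of $K_F$, i.e. $\mathcal{D}(F)(x)=\sup_{y\in K_F}\langle x,y\rangle$ for all $x\in\mathbf{R}^n$; in particular $\mathcal{D}(F)$ is convex. Moreover, if $G:\mathbf{R}^n\to\mathbf{R}$ is any convex, 1-homogeneous, positive function with $G\le F$, then $G\le\mathcal{D}(F)$. (ii) For every $v\in\mathbb{S}^{n-1}$ and $\overline{x}\in K_F$ the following are equivalent: (a) $\mathcal{D}(F)(v)=\langle v,\overline{x}\rangle$; (b) $\overline{x}\in\mathcal{D}(F)(v)v+v^\perp$; (c) $\overline{x}+v^\perp$ is a supporting hyperplane for $K_F$. (iii) $\mathrm{Ort}(\partial K_F)\subseteq\mathrm{Cont}(F)$.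
   Context: $\mathbb{S}^{n-1}$ is the unit sphere. A function $G$ is 1-homogeneous if $G(\lambda x)=\lambda G(x)$ for $\lambda\ge0$, positive if $G>0$ on $\mathbb{S}^{n-1}$; an integrand is a lower semicontinuous, 1-homogeneous, positive function. $K_F:=\bigcap_{v\in\mathbb{S}^{n-1}}\{z:\langle z,v\rangle\le F(v)\}$. Operators: $\mathcal{W}(F)(v):=\inf_{w\in\mathbb{S}^{n-1},\langle v,w\rangle>0}F(w)/\langle v,w\rangle$, $\mathcal{A}(G)(v):=\sup_{w\in\mathbb{S}^{n-1}}G(w)\langle v,w\rangle$ for $v\in\mathbb{S}^{n-1}$, extended by 1-homogeneity; $\mathcal{D}(F):=\mathcal{A}(\mathcal{W}(F))$. $\mathrm{Cont}(F):=\{x:F(x)=\mathcal{D}(F)(x)\}$. For $u\ne0$, ''$\overline{x}+u^\perp$ is a supporting hyperplane for $K_F$'' means $\overline{x}+u^\perp=\{z:\langle z,u\rangle=\max_{y\in K_F}\langle y,u\rangle\}$. For convex $K$ and $y\in\partial K$, $\mathcal{N}_y\partial K:=\{N:\langle N,z-y\rangle\le0\ \forall z\in K\}$; if $\mathcal{N}_y\partial K\cap\mathbb{S}^{n-1}$ is a singleton its element is $N_{\partial K}(y)$; $\mathrm{Ort}(\partial K):=\{v\ne0:\exists y\in\partial K,\ N_{\partial K}(y)\text{ defined and } =v/|v|\}$. *)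

(* R : realType, vectors of R^n are row vectors 'rV[R]_n,
   equipped with the library topology (equivalent to the Euclidean one). *)
From HB Require Import structures.
From mathcomp Require Import all_boot all_order all_algebra.
From mathcomp Require Import all_classical all_reals all_analysis.
Set Implicit Arguments. Unset Strict Implicit. Unset Printing Implicit Defensive.
Import Order.TTheory GRing.Theory Num.Theory.
Import numFieldNormedType.Exports.
Local Open Scope classical_set_scope.
Local Open Scope ring_scope.

Section Defs.
Variables (R : realType) (n : nat).
Notation vec := 'rV[R]_n.

Definition dot (x y : vec) : R := \sum_(i < n) x ord0 i * y ord0 i.
Definition enorm (x : vec) : R := Num.sqrt (dot x x).

Definition sphere : set vec := [set v | enorm v = 1].

Definition one_homogeneous (G : vec -> R) : Prop :=
  forall (lam : R) (x : vec), 0 <= lam -> G (lam *: x) = lam * G x.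

Definition positive_on_sphere (G : vec -> R) : Prop :=
  forall v, sphere v -> 0 < G v.

Definition convex_fun (G : vec -> R) : Prop :=
  forall (x y : vec) (t : R), 0 <= t <= 1 ->
    G (t *: x + (1 - t) *: y) <= t * G x + (1 - t) * G y.

Definition integrand (F : vec -> R) : Prop :=
  lower_semicontinuous (fun x => (F x)%:E) /\ one_homogeneous F /\
  positive_on_sphere F.

Definition KF (F : vec -> R) : set vec :=
  [set z | forall v, sphere v -> dot z v <= F v].

Definition hom_ext (g : vec -> R) (x : vec) : R :=
  if x == 0 then 0 else enorm x * g ((enorm x)^-1 *: x).

Definition W_sph (F : vec -> R) (v : vec) : R :=
  inf [set F w / dot v w | w in [set w | sphere w /\ 0 < dot v w]].
Definition W (F : vec -> R) : vec -> R := hom_ext (W_sph F).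

Definition A_sph (G : vec -> R) (v : vec) : R :=
  sup [set G w * dot v w | w in sphere].
Definition A (G : vec -> R) : vec -> R := hom_ext (A_sph G).

Definition D (F : vec -> R) : vec -> R := A (W F).

Definition Cont (F : vec -> R) : set vec := [set x | F x = D F x].

Definition support_fun (K : set vec) (x : vec) : R := sup [set dot x y | y in K].

Definition supporting_hyperplane (K : set vec) (xbar u : vec) : Prop :=
  exists m : R, (exists2 y, K y & dot y u = m) /\ (forall y, K y -> dot y u <= m) /\
    [set xbar + z | z in [set z | dot z u = 0]] = [set z | dot z u = m].

Definition boundary (K : set vec) : set vec := closure K `\` interior K.

Definition normal_cone (K : set vec) (y : vec) : set vec :=
  [set N | forall z, K z -> dot N (z - y) <= 0].

Definition Ort (K : set vec) : set vec :=
  [set v | v != 0 /\ exists2 y, boundary K y &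
     normal_cone K y `&` sphere = [set (enorm v)^-1 *: v]].
End Defs.

(* On the sphere, W(F) is the radial function rho of K_F, rho(w) = max {t | t w in K_F};
   hence A(W(F))(v) = sup_w rho(w) <v,w> = sup_{y in K_F} <v,y>, i.e. D(F) is the support
   function h of K_F.  A convex 1-homogeneous G <= F is sublinear, so by Hahn-Banach
   G(x) = <y,x> for some y with <y,.> <= G <= F, i.e. y in K_F, whence G <= h.
   At a boundary point y of the closed set K_F some constraint is active, <y,w> = F(w):
   otherwise lower semicontinuity of F and compactness of the sphere keep all the
   constraints strict near y.  Such a w is a unit normal at y, hence equal to v/|v| when
   that normal is unique, and F(w) = <y,w> <= h(w) <= F(w). *)

From mathcomp Require Import all_boot all_order all_algebra.
From mathcomp Require Import all_classical all_reals all_analysis.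
From mathcomp Require Import lra.
Import Order.TTheory GRing.Theory Num.Theory.
Import numFieldNormedType.Exports.
Local Open Scope classical_set_scope.
Local Open Scope ring_scope.
Set Implicit Arguments. Unset Strict Implicit. Unset Printing Implicit Defensive.

Section InnerProduct.
Variables (R : realType) (n : nat).
Local Notation vec := 'rV[R]_n.
Implicit Types (x y z v w : vec) (a : R).

Lemma dotC x y : dot x y = dot y x.
Proof. by apply: eq_bigr => i _; rewrite mulrC. Qed.

Lemma dotDl x y z : dot (x + y) z = dot x z + dot y z.
Proof. by rewrite /dot -big_split; apply: eq_bigr => i _; rewrite mxE mulrDl. Qed.

Lemma dotZl a x y : dot (a *: x) y = a * dot x y.
Proof. by rewrite /dot mulr_sumr; apply: eq_bigr => i _; rewrite mxE mulrA. Qed.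

Lemma dotNl x y : dot (- x) y = - dot x y.
Proof. by rewrite -scaleN1r dotZl mulN1r. Qed.

Lemma dotBl x y z : dot (x - y) z = dot x z - dot y z.
Proof. by rewrite dotDl dotNl. Qed.

Lemma dot0l x : dot 0 x = 0.
Proof. by rewrite -(scale0r x) dotZl mul0r. Qed.

Lemma dotDr x y z : dot x (y + z) = dot x y + dot x z.
Proof. by rewrite dotC dotDl !(dotC x). Qed.

Lemma dotZr a x y : dot x (a *: y) = a * dot x y.
Proof. by rewrite dotC dotZl dotC. Qed.

Lemma dotNr x y : dot x (- y) = - dot x y.
Proof. by rewrite dotC dotNl dotC. Qed.

Lemma dotBr x y z : dot x (y - z) = dot x y - dot x z.
Proof. by rewrite dotDr dotNr. Qed.

Lemma dot0r x : dot x 0 = 0.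
Proof. by rewrite dotC dot0l. Qed.

Lemma dot_delta x i : dot x (delta_mx 0 i) = x ord0 i.
Proof.
rewrite /dot (bigD1 i) //= big1 ?addr0; first by rewrite mxE !eqxx mulr1.
by move=> j ji; rewrite mxE eqxx /= (negbTE ji) mulr0.
Qed.

Lemma dotxx_ge0 x : 0 <= dot x x.
Proof. by apply: sumr_ge0 => i _; rewrite -expr2 sqr_ge0. Qed.

Lemma dotxx_eq0 x : (dot x x == 0) = (x == 0).
Proof.
apply/idP/eqP => [|->]; last by rewrite dot0l.
rewrite psumr_eq0 => [/allP x0|i _]; last by rewrite -expr2 sqr_ge0.
apply/rowP => i; rewrite mxE; apply/eqP.
by rewrite -sqrf_eq0 expr2; exact: x0 (mem_index_enum i).
Qed.

Lemma continuous_dot : continuous (fun p : vec * vec => dot p.1 p.2).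
Proof.
apply: (@continuous_big _ _ +%R 0 xpredT add_continuous) => i _ p.
apply: cvgM.
  by apply: (@continuous_comp _ _ _ fst (fun x : vec => x ord0 i));
    [exact: cvg_fst | exact: coord_continuous].
by apply: (@continuous_comp _ _ _ snd (fun x : vec => x ord0 i));
  [exact: cvg_snd | exact: coord_continuous].
Qed.

Lemma enormZ a x : enorm (a *: x) = `|a| * enorm x.
Proof. by rewrite /enorm dotZl dotZr mulrA -expr2 sqrtrM ?sqr_ge0 // sqrtr_sqr. Qed.

Lemma enorm_gt0 x : x != 0 -> 0 < enorm x.
Proof. by move=> x0; rewrite sqrtr_gt0 lt_def dotxx_ge0 dotxx_eq0 x0. Qed.

Lemma sphereE v : sphere v <-> dot v v = 1.
Proof.
rewrite /sphere /enorm /=; split=> [v1|->]; last exact: sqrtr1.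
by rewrite -[LHS]sqr_sqrtr ?dotxx_ge0 // v1 expr1n.
Qed.

Lemma sphere_neq0 v : sphere v -> v != 0.
Proof. by move=> /sphereE v1; rewrite -dotxx_eq0 v1 oner_neq0. Qed.

Lemma sphere_normalize x : x != 0 -> sphere ((enorm x)^-1 *: x).
Proof.
move=> /enorm_gt0 x0; rewrite /sphere /= enormZ ger0_norm ?invr_ge0 ?ltW //.
by rewrite mulVf ?gt_eqF.
Qed.

Lemma normalizeK x : x != 0 -> enorm x *: ((enorm x)^-1 *: x) = x.
Proof. by move=> /enorm_gt0 x0; rewrite scalerA mulfV ?gt_eqF // scale1r. Qed.

Lemma sphereN v : sphere v -> sphere (- v).
Proof. by rewrite /sphere /= -scaleN1r enormZ normrN normr1 mul1r. Qed.

Lemma sphere_delta i : sphere (delta_mx 0 i : vec).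
Proof. by apply/sphereE; rewrite dot_delta mxE !eqxx. Qed.

Lemma sphere_coord v i : sphere v -> `|v ord0 i| <= 1.
Proof.
move=> /sphereE v1; rewrite -(ler_pXn2r (_ : 0 < 2)%N) ?nnegrE // expr1n.
rewrite real_normK ?num_real // -v1 /dot (bigD1 i) //= -expr2 lerDl.
by apply: sumr_ge0 => j _; rewrite -expr2 sqr_ge0.
Qed.

Lemma compact_sphere : compact (@sphere R n).
Proof.
apply: (@subclosed_compact _ _ [set v : vec | forall i, `[-1, 1]%classic (v ord0 i)]).
- have -> : @sphere R n = (fun v => dot v v) @^-1` [set 1].
    by apply/funext => v; apply/propext; rewrite sphereE.
  apply: preimage_closed; last exact: closed_eq.
  move=> v _.
  apply: (@continuous_comp _ _ _ (fun v : vec => (v, v)) (fun p => dot p.1 p.2)).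
    exact: (@cvg_pair _ _ _ _ (nbhs v) (nbhs v) _ _ _ id id cvg_id cvg_id).
  exact: continuous_dot.
- exact: (rV_compact (fun=> @segment_compact R (-1) 1)).
- by move=> v /sphere_coord v1 i; rewrite /= in_itv /= -ler_norml.
Qed.

Lemma sphere_dot_decomp v x m :
  sphere v -> dot x v = m <-> exists2 z, dot z v = 0 & x = m *: v + z.
Proof.
move=> /sphereE v1; split=> [<-|[z zv ->]].
  by exists (x - dot x v *: v); [rewrite dotBl dotZl v1 mulr1 subrr | rewrite addrC subrK].
by rewrite dotDl dotZl v1 mulr1 zv addr0.
Qed.

End InnerProduct.

Section SublinearExtension.
Variables (R : realType) (V : lmodType R) (p : V -> R).
Hypothesis pZ : forall (t : R) (x : V), 0 <= t -> p (t *: x) = t * p x.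
Hypothesis pD : forall x y : V, p (x + y) <= p x + p y.

Lemma sublinear0 : p 0 = 0.
Proof. by rewrite -(scale0r 0) pZ // mul0r. Qed.

Lemma sublinearZ_ge (a : R) (x : V) : a * p x <= p (a *: x).
Proof.
have [a0|a0] := leP 0 a; first by rewrite pZ.
have pN : 0 <= p x + p (- x) by rewrite -sublinear0 -(subrr x); exact: pD.
rewrite -[a *: x]opprK -scaleNr -scalerN pZ; last by rewrite oppr_ge0 ltW.
have : 0 <= - a * (p x + p (- x)) by rewrite mulr_ge0 // oppr_ge0 ltW.
by rewrite mulrDr mulNr; lra.
Qed.

(* One Hahn-Banach step.  The subspace is parametrised by [g] and [f] lives on the
   parameters, so no well-definedness on the subspace is needed. *)
Lemma sublinear_extend (X : lmodType R) (f : X -> R) (g : X -> V) (b : V) :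
  {morph f : l m / l + m} -> {morph g : l m / l + m} ->
  (forall a l, f (a *: l) = a * f l) -> (forall a l, g (a *: l) = a *: g l) ->
  (forall l, f l <= p (g l)) ->
  exists d, forall l t, f l + t * d <= p (g l + t *: b).
Proof.
move=> fD gD fZ gZ fp.
have gap l m : f l - p (g l - b) <= p (g m + b) - f m.
  have := fp (l + m); rewrite fD gD.
  have := pD (g l - b) (g m + b); rewrite addrACA addNr addr0; lra.
pose S := [set f l - p (g l - b) | l in [set: X]].
have S_ub l : f l - p (g l - b) <= sup S.
  apply: sup_upper_bound; last by exists l.
  split; first by exists (f 0 - p (g 0 - b)), 0.
  by exists (p (g 0 + b) - f 0) => _ [m _ <-]; exact: gap.
have S_lb m : sup S <= p (g m + b) - f m.
  by apply: ge_sup; [exists (f 0 - p (g 0 - b)), 0 | move=> _ [l _ <-]; exact: gap].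
exists (sup S) => l t.
have [t0|t0|->] := ltgtP t 0; last by rewrite mul0r scale0r !addr0.
- have := S_ub ((- t)^-1 *: l); rewrite fZ gZ.
  have -> : g l + t *: b = - t *: ((- t)^-1 *: g l - b).
    by rewrite scalerBr scalerA mulfV ?oppr_eq0 ?lt_eqF // scale1r scaleNr opprK.
  have nt : 0 < - t by rewrite oppr_gt0.
  rewrite pZ; last exact: ltW.
  move=> /(ler_wpM2l (ltW nt)); rewrite mulrBr mulrA mulfV ?gt_eqF // mul1r; lra.
- have := S_lb (t^-1 *: l); rewrite fZ gZ.
  have -> : g l + t *: b = t *: (t^-1 *: g l + b).
    by rewrite scalerDr scalerA mulfV ?gt_eqF // scale1r.
  rewrite pZ; last exact: ltW.
  move=> /(ler_wpM2l (ltW t0)); rewrite mulrBr mulrA mulfV ?gt_eqF // mul1r; lra.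
Qed.

Definition dominated (b : nat -> V) (c : nat -> R) (k : nat) :=
  forall l : nat -> R, \sum_(i < k) l i * c i <= p (\sum_(i < k) l i *: b i).

Lemma dominated_extend b c k : dominated b c k ->
  exists d, dominated b (fun i => if i == k then d else c i) k.+1.
Proof.
move=> bc.
pose f (l : nat -> R) := \sum_(i < k) l i * c i.
pose g (l : nat -> R) := \sum_(i < k) l i *: b i.
have fD : {morph f : l m / l + m}.
  by move=> l m; rewrite -big_split; apply: eq_bigr => i _; rewrite mulrDl.
have gD : {morph g : l m / l + m}.
  by move=> l m; rewrite -big_split; apply: eq_bigr => i _; rewrite scalerDl.
have fZ a l : f (a *: l) = a * f l.
  by rewrite mulr_sumr; apply: eq_bigr => i _; rewrite mulrA.
have gZ a l : g (a *: l) = a *: g l.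
  by rewrite scaler_sumr; apply: eq_bigr => i _; rewrite scalerA.
have [d bcd] := sublinear_extend (b k) fD gD fZ gZ bc.
exists d => l; rewrite !big_ord_recr /= eqxx.
under eq_bigr => i _ do rewrite ltn_eqF //.
exact: bcd.
Qed.

Lemma dominated_extend_all b c : dominated b c 1 ->
  forall k, exists2 c', c' 0%N = c 0%N & dominated b c' k.+1.
Proof.
move=> bc; elim=> [|k [c' c'0 bc']]; first by exists c.
have [d bcd] := dominated_extend bc'.
by exists (fun i => if i == k.+1 then d else c' i).
Qed.

End SublinearExtension.

Section HahnBanach.
Variables (R : realType) (n : nat) (p : 'rV[R]_n -> R).
Hypothesis pZ : forall (t : R) x, 0 <= t -> p (t *: x) = t * p x.
Hypothesis pD : forall x y, p (x + y) <= p x + p y.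

Definition ord_cons (T : Type) (a d : T) (f : 'I_n -> T) (i : nat) : T :=
  if i is j.+1 then oapp f d (insub j) else a.

Lemma ord_cons0 T (a d : T) f : ord_cons a d f 0 = a.
Proof. by []. Qed.

Lemma ord_consS T (a d : T) f (j : 'I_n) : ord_cons a d f j.+1 = f j.
Proof. by rewrite /= valK. Qed.

Theorem hahn_banach_rV x :
  exists y, (forall z, dot y z <= p z) /\ p x <= dot y x.
Proof.
(* Start from [t x |-> t p x] on the line through [x], then add the unit vectors. *)
have [|c c0 dom] := @dominated_extend_all _ _ _ pZ pD
    (ord_cons x 0 (delta_mx 0)) (fun=> p x) _ n.
  by move=> l; rewrite !big_ord1; exact: sublinearZ_ge.
pose y : 'rV[R]_n := \row_j c (val j).+1.
have key a (z : 'rV[R]_n) : a * p x + dot y z <= p (a *: x + z).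
  have -> : dot y z = \sum_(j < n) z ord0 j * c j.+1.
    by apply: eq_bigr => j _; rewrite mxE mulrC.
  have := dom (ord_cons a 0 (fun j => z ord0 j)); rewrite !big_ord_recl c0 !ord_cons0.
  under eq_bigr => j _ do rewrite lift0 ord_consS.
  under [X in p (_ + X)]eq_bigr => j _ do rewrite lift0 !ord_consS.
  by rewrite -(row_sum_delta z).
exists y; split=> [z|]; first by have := key 0 z; rewrite mul0r scale0r !add0r.
by have := key 1 (- x); rewrite mul1r scale1r subrr sublinear0 // dotNr; lra.
Qed.

End HahnBanach.

Lemma convex_hom_subadditive (R : realType) (n : nat) (G : 'rV[R]_n -> R) :
  convex_fun G -> one_homogeneous G -> forall x y, G (x + y) <= G x + G y.
Proof.
move=> Gc Ghom x y.
have mid : G (2^-1 *: x + 2^-1 *: y) <= 2^-1 * G x + 2^-1 * G y.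
  have half : 1 - 2^-1 = 2^-1 :> R by lra.
  by have := Gc x y 2^-1; rewrite half; apply; apply/andP; split; lra.
have -> : x + y = 2 *: (2^-1 *: x + 2^-1 *: y).
  by rewrite -scalerDr scalerA mulfV ?pnatr_eq0 // scale1r.
rewrite Ghom ?ler0n //; lra.
Qed.

Section Boundary.
Variables (R : realType) (n : nat) (F : 'rV[R]_n -> R).
Hypothesis F_lsc : lower_semicontinuous (fun x => (F x)%:E).
Local Notation K := (KF F).

Lemma KF_closed : closed K.
Proof.
have -> : K = \bigcap_(v in @sphere R n) [set z | dot z v <= F v].
  by apply/seteqP; split=> z Kz v /Kz.
apply: closed_bigI => v _.
apply: (@preimage_closed _ _ (fun z => dot z v) [set r | r <= F v]); last exact: closed_le.
move=> z _; apply: (@continuous_comp _ _ _ (fun z => (z, v)) (fun q => dot q.1 q.2)).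
  exact: (@cvg_pair _ _ _ _ (nbhs z) (nbhs v) _ _ _ id (cst v) cvg_id (cvg_cst v)).
exact: continuous_dot.
Qed.

Lemma interior_KF y : (forall w, sphere w -> dot y w < F w) -> interior K y.
Proof.
move=> yF.
have dot_swap : continuous (fun q : 'rV[R]_n * 'rV[R]_n => dot q.2 q.1).
  have -> : (fun q : 'rV[R]_n * 'rV[R]_n => dot q.2 q.1) = (fun q => dot q.1 q.2).
    by apply/funext => q; rewrite dotC.
  exact: continuous_dot.
have : \forall z \near y, @sphere R n `<=` [set w | dot z w < F w].
  apply: ((compact_near_coveringP _).1 (@compact_sphere R n) _ (nbhs y)
    (fun z w => dot z w < F w)) => w w1.
  have ywF := yF w w1; pose a := (dot y w + F w) / 2.
  have Fa : \forall w' \near w, (a%:E < (F w')%:E)%E.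
    have aw : (a%:E < (F w)%:E)%E by rewrite lte_fin /a; lra.
    by have [V wV VF] := F_lsc aw; exact: filterS VF wV.
  have da : \forall q \near (w, y), dot q.2 q.1 < a.
    by apply: (cvgr_lt _ (dot_swap (w, y))); rewrite /a /=; lra.
  apply: (@filterS _ _ _ ([set q | dot q.2 q.1 < a] `&` [set q | (a%:E < (F q.1)%:E)%E])).
    by move=> [w' z] [/= za]; rewrite lte_fin => aF; lra.
  apply: filterI; first exact: da.
  exists ([set w' | (a%:E < (F w')%:E)%E], setT); first by split; [exact: Fa | exact: filterT].
  by move=> -[? ?] [].
by apply: filterS => z zF v /zF /ltW.
Qed.

Lemma boundary_KF_active y : boundary K y -> K y /\ exists2 w, sphere w & dot y w = F w.
Proof.
move=> [/KF_closed Ky noint]; split=> //; apply: contrapT => inactive.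
apply: noint; apply: interior_KF => w w1; rewrite lt_neqAle Ky // andbT.
by apply/eqP => ywF; apply: inactive; exists w.
Qed.

End Boundary.

Lemma hom_ext_sphere (R : realType) (n : nat) (g : 'rV[R]_n -> R) w :
  sphere w -> hom_ext g w = g w.
Proof.
move=> w1; rewrite /hom_ext (negbTE (sphere_neq0 w1)).
by have -> : enorm w = 1 by []; rewrite invr1 scale1r mul1r.
Qed.

Section SupportFunction.
Variables (R : realType) (n : nat) (F : 'rV[R]_n -> R).
Hypothesis F_ge0 : forall w, sphere w -> 0 <= F w.
Implicit Types (x y z v w u : 'rV[R]_n).
Local Notation K := (KF F).
Local Notation h := (support_fun K).

Lemma KF0 : K 0.
Proof. by move=> v /F_ge0; rewrite dot0l. Qed.

Lemma KF_coord_le y i : K y -> `|y ord0 i| <= F (delta_mx 0 i) + F (- delta_mx 0 i).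
Proof.
move=> Ky; have /Ky := sphere_delta R i; have /Ky := sphereN (sphere_delta R i).
have := F_ge0 (sphere_delta R i); have := F_ge0 (sphereN (sphere_delta R i)).
rewrite dotNr dot_delta ler_norml; lra.
Qed.

Lemma dot_KF_le x y : K y ->
  dot x y <= \sum_i `|x ord0 i| * (F (delta_mx 0 i) + F (- delta_mx 0 i)).
Proof.
move=> Ky; apply: ler_sum => i _; apply: le_trans (ler_norm _) _.
by rewrite normrM ler_wpM2l // KF_coord_le.
Qed.

Lemma support_KF_ub x y : K y -> dot x y <= h x.
Proof.
move=> Ky; apply: sup_upper_bound; last by exists y.
split; first by exists (dot x 0), 0; [exact: KF0|].
by eexists => _ [z Kz <-]; exact: dot_KF_le.
Qed.

Lemma support_KF_lub x a : (forall y, K y -> dot x y <= a) -> h x <= a.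
Proof.
move=> xa; apply: ge_sup; first by exists (dot x 0), 0; [exact: KF0|].
by move=> _ [y Ky <-]; exact: xa.
Qed.

Lemma support_KF0 : h 0 = 0.
Proof.
apply/eqP; rewrite eq_le support_KF_lub => [|y _]; last by rewrite dot0l.
by have := support_KF_ub 0 KF0; rewrite dot0r.
Qed.

Lemma support_KFZ t x : 0 <= t -> h (t *: x) = t * h x.
Proof.
rewrite le_eqVlt => /predU1P[<-|t0]; first by rewrite scale0r support_KF0 mul0r.
apply/eqP; rewrite eq_le; apply/andP; split.
  by apply: support_KF_lub => y Ky; rewrite dotZl ler_pM2l // support_KF_ub.
rewrite -ler_pdivlMl //; apply: support_KF_lub => y Ky.
by rewrite ler_pdivlMl // -dotZl support_KF_ub.
Qed.

Lemma support_KF_convex : convex_fun h.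
Proof.
move=> x y t /andP[t0 t1]; apply: support_KF_lub => z Kz.
rewrite dotDl !dotZl; apply: lerD; apply: ler_wpM2l; rewrite ?subr_ge0 //;
  exact: support_KF_ub.
Qed.

Lemma support_KF_le_F u : sphere u -> h u <= F u.
Proof. by move=> u1; apply: support_KF_lub => y /(_ u u1); rewrite dotC. Qed.

(* On the sphere, [W_sph F] is the radial function of [K]. *)
Local Notation rho := (W_sph F).

Lemma W_sph_ge0 v : sphere v -> 0 <= rho v.
Proof.
move=> v1; apply: lb_le_inf.
  by exists (F v / dot v v), v => //; split; rewrite ?(sphereE v).1 ?ltr01.
by move=> _ [w [w1 vw] <-]; rewrite divr_ge0 ?F_ge0 ?ltW.
Qed.

Lemma W_sph_KF v : sphere v -> K (rho v *: v).
Proof.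
move=> v1 u u1; rewrite dotZl.
have [vu|vu] := ltP 0 (dot v u); last first.
  by apply: le_trans (F_ge0 u1); rewrite mulr_ge0_le0 ?W_sph_ge0.
rewrite -ler_pdivlMr //; apply: ge_inf; last by exists u.
by exists 0 => _ [w [w1 vw] <-]; rewrite divr_ge0 ?F_ge0 ?ltW.
Qed.

Lemma W_sph_max w t : sphere w -> K (t *: w) -> t <= rho w.
Proof.
move=> w1 Kt; apply: lb_le_inf.
  by exists (F w / dot w w), w => //; split; rewrite ?(sphereE w).1 ?ltr01.
by move=> _ [u [u1 wu] <-]; rewrite ler_pdivlMr // -dotZl; exact: Kt.
Qed.

Lemma A_sph_W v : sphere v -> A_sph (W F) v = h v.
Proof.
move=> v1.
have ub w : sphere w -> W F w * dot v w <= h v.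
  by move=> w1; rewrite /W hom_ext_sphere // -dotZr; apply/support_KF_ub/W_sph_KF.
have supA : has_sup [set W F w * dot v w | w in @sphere R n].
  split; first by exists (W F v * dot v v), v.
  by exists (h v) => _ [w w1 <-]; exact: ub.
have A_ge w : sphere w -> W F w * dot v w <= A_sph (W F) v.
  by move=> w1; apply: sup_upper_bound => //; exists w.
apply/eqP; rewrite eq_le; apply/andP; split.
  by apply: ge_sup; [case: supA | move=> _ [w w1 <-]; exact: ub].
apply: support_KF_lub => y Ky.
have [vy|vy] := leP (dot v y) 0.
  apply: le_trans vy (le_trans _ (A_ge v v1)).
  by rewrite (sphereE _).1 // mulr1 /W hom_ext_sphere ?W_sph_ge0.
have y0 : y != 0 by apply: contraTneq vy => ->; rewrite dot0r ltxx.
set u := (enorm y)^-1 *: y; have u1 : sphere u := sphere_normalize y0.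
have yE : y = enorm y *: u by rewrite normalizeK.
have vu : 0 < dot v u by move: vy; rewrite yE dotZr pmulr_rgt0 // enorm_gt0.
apply: le_trans (A_ge u u1); rewrite [in dot v y]yE dotZr.
apply: ler_wpM2r; first exact: ltW.
by rewrite /W hom_ext_sphere //; apply: W_sph_max; rewrite // -yE.
Qed.

Lemma D_support_KF x : D F x = h x.
Proof.
rewrite /D /A /hom_ext; have [->|x0] := eqVneq x 0; first by rewrite support_KF0.
rewrite A_sph_W; last exact: sphere_normalize.
by rewrite -support_KFZ ?normalizeK //; exact/ltW/enorm_gt0.
Qed.

Lemma convex_hom_le_support_KF G : convex_fun G -> one_homogeneous G ->
  (forall v, sphere v -> G v <= F v) -> forall x, G x <= h x.
Proof.
move=> Gc Ghom GF x.
have [y [yG Gx]] := hahn_banach_rV Ghom (convex_hom_subadditive Gc Ghom) x.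
apply: le_trans Gx _; rewrite dotC; apply: support_KF_ub => // v v1.
exact: le_trans (yG v) (GF v v1).
Qed.

Lemma supporting_hyperplane_KF x v :
  K x -> supporting_hyperplane K x v <-> dot x v = h v.
Proof.
move=> Kx; split=> [[m [[y Ky yv] [Km /seteqP[hyper _]]]]|xv].
  have xm : dot x v = m by apply: hyper; exists 0; [exact: dot0l | exact: addr0].
  apply/eqP; rewrite eq_le xm -[X in X <= _]yv dotC support_KF_ub //=.
  by apply: support_KF_lub => z Kz; rewrite dotC; exact: Km.
exists (h v); split; first by exists x.
split=> [y Ky|]; first by rewrite dotC support_KF_ub.
apply/seteqP; split=> [_ [z /= zv <-]|z /= zv]; first by rewrite dotDl zv addr0.
by exists (z - x); [rewrite /= dotBl zv xv subrr | rewrite addrC subrK].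
Qed.

Hypothesis F_lsc : lower_semicontinuous (fun x => (F x)%:E).
Hypothesis F_hom : one_homogeneous F.

Lemma Ort_KF_sub_Cont : Ort K `<=` Cont F.
Proof.
move=> v [v0 [y /(boundary_KF_active F_lsc) [Ky [w w1 ywF]] normalN]].
set u := (enorm v)^-1 *: v.
have wu : w = u.
  suff : (normal_cone K y `&` @sphere R n) w by rewrite normalN.
  by split=> // z Kz; rewrite dotBr dotC (dotC w) ywF subr_le0; exact: Kz.
have Fu : F u = h u.
  apply/eqP; rewrite eq_le -wu support_KF_le_F // andbT -ywF dotC.
  exact: support_KF_ub.
have v_ge0 : 0 <= enorm v by exact/ltW/enorm_gt0.
by rewrite /Cont /= D_support_KF -(normalizeK v0) -/u F_hom // support_KFZ // Fu.
Qed.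

End SupportFunction.

Theorem lemma2p3 (R : realType) (n : nat) (F : 'rV[R]_n -> R) :
  (2 <= n)%N -> integrand F ->
  (* (i) *)
  ((forall x, D F x = support_fun (KF F) x) /\ convex_fun (D F) /\
   (forall G : 'rV[R]_n -> R, convex_fun G -> one_homogeneous G ->
      positive_on_sphere G -> (forall x, G x <= F x) ->
      forall x, G x <= D F x)) /\
  (* (ii) *)
  (forall v xbar, sphere v -> KF F xbar ->
     (D F v = dot v xbar <->
        (exists2 z, dot z v = 0 & xbar = D F v *: v + z)) /\
     ((exists2 z, dot z v = 0 & xbar = D F v *: v + z) <->
        supporting_hyperplane (KF F) xbar v)) /\
  (* (iii) *)
  Ort (KF F) `<=` Cont F.
Proof.
move=> _ [F_lsc [F_hom F_pos]].
have F_ge0 w : sphere w -> 0 <= F w by move=> /F_pos /ltW.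
have DE := D_support_KF F_ge0.
split; [split; [|split] | split].
- exact: DE.
- by move=> x y t t01; rewrite !DE; exact: support_KF_convex.
- by move=> G Gc Ghom _ GF x; rewrite DE; apply: convex_hom_le_support_KF => // v _.
- move=> v x v1 Kx; rewrite -sphere_dot_decomp // supporting_hyperplane_KF // DE.
  by rewrite dotC; split; split=> ->.
- exact: Ort_KF_sub_Cont.
Qed.
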